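(* Let $n \ge 3$ and let $x_1 < x_2 < \dots < x_n$ be real numbers; let $h(z) = \prod_{j=1}^n (x_j - z)$ and $q(z) = z - n\,h(z)/h'(z)$. Let $\theta \in \mathbb{C}$ and $R = \max\{|\theta - x_j| : 1 \le j \le n\}$, and let $\overline{B(\theta,R)}$ be the closed disc with center $\theta$ and radius $R$. Then $q\left(\mathbb{C} \setminus \overline{B(\theta,R)}\right) \subset \overline{B(\theta,R)}$. *)

From HB Require Import structures.
From mathcomp Require Import all_boot all_order all_algebra.
From mathcomp Require Import reals.
From mathcomp Require Export complex.
Set Implicit Arguments. Unset Strict Implicit. Unset Printing Implicit Defensive.
Import Order.TTheory GRing.Theory Num.Theory.
Local Open Scope ring_scope.

Definition hpoly (R : realType) (n : nat) (x : 'I_n -> R) : {poly R[i]} :=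
  \prod_(j < n) (((x j)%:C)%C%:P - 'X).

Definition qmap (R : realType) (n : nat) (x : 'I_n -> R) (z : R[i]) : R[i] :=
  z - n%:R * (hpoly x).[z] / ((hpoly x)^`()).[z].

(* R = max_j |theta - x_j| (norms are >= 0, and n >= 1 in use, so 0 is harmless) *)
Definition radius (R : realType) (n : nat) (x : 'I_n -> R) (theta : R[i]) : R :=
  \big[Num.max/0]_(j < n) ComplexField.Normc.normc (theta - ((x j)%:C)%C).

From HB Require Import structures.
From mathcomp Require Import all_boot all_order all_algebra.
From mathcomp Require Import reals complex.
From mathcomp Require Import ring.
Import Order.TTheory GRing.Theory Num.Theory.
Import ComplexField.Normc.
Local Open Scope ring_scope.

(* Put w = z - theta and a_j = theta - x_j, so that |a_j| <= R < |w| and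
   q(z) - theta = w - n / sum_j 1/(w + a_j).  For |w| > R the Moebius map
   M_w(d) = (R^2 + w d) / (conj w + d) sends the closed disc |d| <= R into
   itself, because |R^2 + w d|^2 - R^2 |conj w + d|^2 = (|w|^2 - R^2)(|d|^2 - R^2).
   Moreover 1/(w + a_j) = (conj w + d_j) / (|w|^2 - R^2) with d_j = -M_{conj w}(a_j)
   in the disc; summing, q(z) - theta = M_w(m) where m, the mean of the d_j,
   lies in the disc by convexity. *)

Lemma horner_deriv_prod_subX (F : fieldType) (I : Type) (s : seq I)
    (c : I -> F) (z : F) :
  (forall j, z != c j) ->
  (\prod_(j <- s) ((c j)%:P - 'X))^`().[z] =
  (\prod_(j <- s) ((c j)%:P - 'X)).[z] * \sum_(j <- s) (z - c j)^-1.
Proof.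
move=> z_neq; elim: s => [|a s IHs].
  by rewrite !big_nil derivC horner0 mulr0.
have za0 : z - c a != 0 by rewrite subr_eq0.
rewrite !big_cons derivM !hornerD !hornerM derivB derivC derivX sub0r.
by rewrite !hornerE IHs; field.
Qed.

Lemma normr_addr_gt0 (R : numDomainType) (V : normedZmodType R) (x y : V) :
  `|y| < `|x| -> 0 < `|x + y|.
Proof. by rewrite -subr_gt0 => /lt_le_trans; apply; apply: lerB_normD. Qed.

Lemma normr_mean_le (F : numFieldType) (n : nat) (d : 'I_n -> F) (r : F) :
  (0 < n)%N -> (forall j, `|d j| <= r) -> `|(\sum_j d j) / n%:R| <= r.
Proof.
move=> n_gt0 d_le; rewrite normf_div normr_nat ler_pdivrMr ?ltr0n //.
apply: le_trans (ler_norm_sum _ _ _) _.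
apply: le_trans (ler_sum _ (fun j _ => d_le j)) _.
by rewrite sumr_const card_ord mulr_natr.
Qed.

Section DiscMobius.
Context {C : numClosedFieldType}.
Implicit Types r w d a : C.

Definition disc_mobius r w d := (r ^+ 2 + w * d) / (w^* + d).

Lemma sqr_normr_subr_neq0 {r w} : 0 <= r -> r < `|w| -> `|w| ^+ 2 - r ^+ 2 != 0.
Proof. by move=> r_ge0 r_lt_w; rewrite subr_eq0 gt_eqF // ltr_pXn2r ?nnegrE. Qed.

Lemma disc_mobius_normr_identity r w d : r \is Num.real ->
  `|r ^+ 2 + w * d| ^+ 2 - r ^+ 2 * `|w^* + d| ^+ 2 =
  (`|w| ^+ 2 - r ^+ 2) * (`|d| ^+ 2 - r ^+ 2).
Proof.
move=> /conj_Creal rJ.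
by rewrite !normCK !rmorphD !rmorphM /= conjCK rJ; ring.
Qed.

Lemma normr_disc_mobius_le r w d :
  0 <= r -> r < `|w| -> `|d| <= r -> `|disc_mobius r w d| <= r.
Proof.
move=> r_ge0 r_lt_w d_le.
have den_gt0 : 0 < `|w^* + d|.
  by apply: normr_addr_gt0; rewrite norm_conjC (le_lt_trans d_le).
rewrite normf_div ler_pdivrMr // -(ler_pXn2r (_ : 0 < 2)%N) ?nnegrE ?mulr_ge0 //.
rewrite exprMn -subr_le0 disc_mobius_normr_identity ?ger0_real //.
by rewrite mulr_ge0_le0 // ?subr_ge0 ?subr_le0 ler_pXn2r ?nnegrE // ltW.
Qed.

Lemma inv_addr_disc_mobius {r w a} : 0 <= r -> r < `|w| -> `|a| <= r ->
  (w + a)^-1 = (w^* - disc_mobius r w^* a) / (`|w| ^+ 2 - r ^+ 2).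
Proof.
move=> r_ge0 r_lt_w a_le.
have wa0 : w + a != 0 by rewrite -normr_gt0 normr_addr_gt0 // (le_lt_trans a_le).
move: (sqr_normr_subr_neq0 r_ge0 r_lt_w); rewrite /disc_mobius conjCK normCK => K0.
by field; rewrite wa0 K0.
Qed.

Theorem normr_sub_harmonic_mean_le {n : nat} {r w} {a : 'I_n -> C} :
  (0 < n)%N -> (forall j, `|a j| <= r) -> r < `|w| ->
  `|w - n%:R / \sum_j (w + a j)^-1| <= r.
Proof.
move=> n_gt0 a_le r_lt_w.
have r_ge0 : 0 <= r := le_trans (normr_ge0 _) (a_le (Ordinal n_gt0)).
have K0 := sqr_normr_subr_neq0 r_ge0 r_lt_w.
have n0 : n%:R != 0 :> C by rewrite pnatr_eq0 -lt0n.
pose m := - (\sum_j disc_mobius r w^* (a j)) / n%:R.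
have m_le : `|m| <= r.
  rewrite /m mulNr normrN; apply: normr_mean_le => // j.
  by apply: normr_disc_mobius_le; rewrite ?norm_conjC.
have wm0 : w^* + m != 0.
  by rewrite -normr_gt0 normr_addr_gt0 // norm_conjC (le_lt_trans m_le).
have -> : \sum_j (w + a j)^-1 = n%:R * (w^* + m) / (`|w| ^+ 2 - r ^+ 2).
  under eq_bigr => j _ do rewrite (inv_addr_disc_mobius r_ge0 r_lt_w (a_le j)).
  rewrite -mulr_suml sumrB sumr_const card_ord /m.
  by field; rewrite K0 n0.
suff -> : w - n%:R / (n%:R * (w^* + m) / (`|w| ^+ 2 - r ^+ 2)) = disc_mobius r w m.
  exact: normr_disc_mobius_le.
move: K0; rewrite /disc_mobius normCK => K0.
by field; rewrite wm0 n0 K0.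
Qed.

End DiscMobius.

Lemma real_complex_normc (R : rcfType) (z : R[i]) : ((normc z)%:C)%C = `|z|.
Proof. by case: z. Qed.

Lemma qmap_logderiv (R : realType) (n : nat) (x : 'I_n -> R) (z : R[i]) :
  (forall j, z != ((x j)%:C)%C) ->
  qmap x z = z - n%:R / \sum_(j < n) (z - ((x j)%:C)%C)^-1.
Proof.
move=> z_neq; rewrite /qmap /hpoly horner_deriv_prod_subX //.
have h0 : (\prod_(j < n) (((x j)%:C)%C%:P - 'X)).[z] != 0.
  by rewrite horner_prod; apply/prodf_neq0 => j _; rewrite !hornerE subr_eq0 eq_sym.
by rewrite invfM mulrA mulfK.
Qed.

Theorem mainTheorem9 (R : realType) (n : nat) (x : 'I_n -> R) (theta : R[i])
  (hn : (3 <= n)%N)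
  (hx : forall i j : 'I_n, (i < j)%N -> x i < x j) :
  forall z : R[i], radius x theta < ComplexField.Normc.normc (z - theta) ->
    ComplexField.Normc.normc (qmap x z - theta) <= radius x theta.
Proof.
move=> z; set r := radius x theta.
rewrite -ltcR real_complex_normc => r_lt_w.
have n_gt0 : (0 < n)%N by apply: leq_trans hn.
have a_le j : `|theta - ((x j)%:C)%C| <= (r%:C)%C.
  by rewrite -real_complex_normc lecR; apply: le_bigmax.
have z_neq j : z != ((x j)%:C)%C.
  by apply: contraTneq r_lt_w => ->; rewrite -normrN opprB le_gtF.
rewrite qmap_logderiv // addrAC -lecR real_complex_normc.
have := normr_sub_harmonic_mean_le n_gt0 a_le r_lt_w.
by under eq_bigr do rewrite addrA subrK.
Qed.
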